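(* Let $\kappa\in(0,1)$ and define, for $\varepsilon\in(0,1)$, $$f_\kappa(\varepsilon)=\bigl(1-\kappa\, Q^{-1}(\varepsilon)\bigr)(1-\varepsilon).$$ Then $f_\kappa$ has a unique maximizer $\varepsilon_g^{\star}=\varepsilon_g^\star(\kappa)\in(0,1)$, and $\varepsilon_g^{\star}$ is the unique solution in $(0,1)$ of the fixed point equation $$\Bigl(Q^{-1}(\varepsilon)-(1-\varepsilon)\,\bigl(Q^{-1}\bigr)'(\varepsilon)\Bigr)^{-1}=\kappa,\qquad\text{i.e.}\qquad \Bigl(Q^{-1}(\varepsilon)+(1-\varepsilon)\sqrt{2\pi}\,e^{(Q^{-1}(\varepsilon))^2/2}\Bigr)^{-1}=\kappa .$$ Furthermore, $\varepsilon_g^{\star}(\kappa)$ is increasing in $\kappa$.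
   Context: $Q(x)=\int_x^\infty \frac{1}{\sqrt{2\pi}}e^{-t^2/2}\,dt$ is the tail probability of a standard normal random variable, and $Q^{-1}:(0,1)\to\mathbb{R}$ is its inverse function. In the paper's setting, $f_\kappa$ is (up to the positive factor $\mu$) a Gaussian approximation of the goodput $R_\varepsilon(1-\varepsilon)$ as a function of the packet error probability $\varepsilon$, where $\kappa=\sigma(\mathsf{SNR})/(\mu(\mathsf{SNR})\sqrt{L})$ with $\mu,\sigma^2$ the mean and variance of $\log_2(1+\mathsf{SNR}|h|^2)$, $h\sim\mathcal{CN}(0,1)$, and $L$ the number of independent fading blocks per codeword. *)

From Stdlib Require Import Reals Lra ClassicalEpsilon.
Open Scope R_scope.

Definition gauss (t : R) : R := / sqrt (2 * PI) * exp (- t ^ 2 / 2).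

Definition is_Q (x l : R) : Prop :=
  forall eps, 0 < eps -> exists M, forall b, M <= b ->
    forall pr : Riemann_integrable gauss x b, Rabs (RiemannInt pr - l) < eps.

Definition Q (x : R) : R := epsilon (inhabits 0) (fun l => is_Q x l).

Definition Qinv (e : R) : R := epsilon (inhabits 0) (fun x => Q x = e).

Definition f (kappa e : R) : R := (1 - kappa * Qinv e) * (1 - e).

Definition is_maximizer (kappa e : R) : Prop :=
  0 < e < 1 /\ forall e', 0 < e' < 1 -> f kappa e' <= f kappa e.

Definition fixed_point (kappa e : R) : Prop :=
  / (Qinv e + (1 - e) * sqrt (2 * PI) * exp (Qinv e ^ 2 / 2)) = kappa.

From Pilot Require Import Defs.
From Stdlib Require Import Reals Lra ClassicalEpsilon.
From Coquelicot Require Import Coquelicot.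
Open Scope R_scope.

(* Differentiating under the integral sign shows bell_int t ^ 2 + 2 kernel_int t is constant,
      equal to its value PI / 2 at t = 0; since 0 < kernel_int t <= bell t, this gives the
      total mass sqrt(2 PI) of bell together with explicit Gaussian tail bounds.
   2. Tail function.  tail x = 1/2 - bell_int x / sqrt(2 PI) is therefore the improper integral
      of the density gauss over [x, +oo), so Q = tail; tail is a decreasing bijection from R onto
      (0,1), which describes Qinv, and cdf = 1 - tail.
   3. Optimization.  In the coordinate x = Qinv e the objective is (1 - kappa x) cdf x, whose
      derivative is kappa gauss x (1/kappa - psi x) with psi x = x + cdf x sqrt(2 PI) e^{x^2/2};
      psi (Qinv e) is the denominator of the fixed-point equation.  psi is strictly increasing
      (its derivative is 1 + sqrt(2 PI) e^{x^2/2} (gauss x + x cdf x), and gauss x + x cdf x > 0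
      because it increases and vanishes at -oo) and takes every positive value.  Hence the
      objective has a unique strict maximum, at the unique solution of psi x = 1/kappa, and
      that solution moves left (the maximizer e = tail x moves right) when kappa increases. *)

Lemma mean_value (h h' : R -> R) a b : a < b -> (forall x, is_derive h x (h' x)) ->
  exists c, a < c < b /\ h b - h a = h' c * (b - a).
Proof.
  intros Hab Hd. destruct (MVT_cor2 h h' a b Hab) as [c [Hc Hin]].
  - intros c _. apply is_derive_Reals, Hd.
  - exists c; split; auto.
Qed.

Lemma constant_of_derive_zero (h : R -> R) : (forall x, is_derive h x 0) ->
  forall x y, h x = h y.
Proof.
  intros Hd x y. destruct (Rtotal_order x y) as [Hxy | [-> | Hxy]]; auto;
    destruct (mean_value h (fun _ => 0) _ _ Hxy Hd) as [c [_ Hc]]; lra.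
Qed.

Lemma increasing_of_derive_pos (h h' : R -> R) : (forall x, is_derive h x (h' x)) ->
  (forall x, 0 < h' x) -> forall x y, x < y -> h x < h y.
Proof.
  intros Hd Hpos x y Hxy. destruct (mean_value h h' x y Hxy Hd) as [c [_ Hc]].
  assert (0 < h' c * (y - x)) by (apply Rmult_lt_0_compat; [apply Hpos | lra]). lra.
Qed.

Lemma injective_of_increasing (h : R -> R) : (forall x y, x < y -> h x < h y) ->
  forall x y, h x = h y -> x = y.
Proof.
  intros Hincr x y Hxy. destruct (Rtotal_order x y) as [Hlt | [-> | Hgt]]; auto;
    [apply Hincr in Hlt | apply Hincr in Hgt]; lra.
Qed.

Lemma intermediate_value (h h' : R -> R) a b c : (forall x, is_derive h x (h' x)) ->
  a < b -> h a < c < h b -> exists z, h z = c.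
Proof.
  intros Hd Hab Hc.
  destruct (IVT (fun y => h y - c) a b) as [z [_ Hz]]; try lra.
  - intro y. apply continuity_pt_minus; [|apply continuity_pt_const; intros ? ?; reflexivity].
    apply derivable_continuous_pt. exists (h' y). apply is_derive_Reals, Hd.
  - exists z. lra.
Qed.

Lemma exp_le_compat x y : x <= y -> exp x <= exp y.
Proof. intros [Hlt | ->]; [left; apply exp_increasing | right]; auto. Qed.

(* The Gaussian integral. *)

Definition bell (x : R) : R := exp (- x ^ 2 / 2).

Lemma bell_pos x : 0 < bell x.
Proof. apply exp_pos. Qed.

Lemma bell_derive x : is_derive bell x (- x * bell x).
Proof. unfold bell. auto_derive; auto. simpl; unfold Rdiv; field. Qed.

Lemma bell_continuous x : continuous bell x.
Proof. apply (ex_derive_continuous (V := R_NormedModule)). eexists. apply bell_derive. Qed.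

(* x^2 e^{-x^2/2} < 2, from e^y >= 1 + y. *)
Lemma bell_decay x : x ^ 2 * bell x < 2.
Proof.
  unfold bell. replace (- x ^ 2 / 2) with (- (x ^ 2 / 2)) by field. rewrite exp_Ropp.
  assert (Hexp : 1 + x ^ 2 / 2 <= exp (x ^ 2 / 2)) by apply exp_ineq1_le.
  assert (Hpos := exp_pos (x ^ 2 / 2)).
  apply (Rmult_lt_reg_r (exp (x ^ 2 / 2))); auto.
  rewrite Rmult_assoc, Rinv_l by lra. lra.
Qed.

Definition bell_int (t : R) : R := RInt bell 0 t.

Lemma bell_int_0 : bell_int 0 = 0.
Proof. apply (RInt_point (V := R_CompleteNormedModule)). Qed.

Lemma bell_int_derive t : is_derive bell_int t (bell t).
Proof.
  apply (is_derive_RInt (V := R_CompleteNormedModule) bell bell_int 0).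
  - apply filter_forall. intros b. apply RInt_correct.
    apply (ex_RInt_continuous (V := R_CompleteNormedModule)). intros; apply bell_continuous.
  - apply bell_continuous.
Qed.

(* The auxiliary integrand of the classical proof that \int bell = sqrt(2 PI),
   and its partial derivative in the parameter t. *)
Definition kernel (t s : R) : R := exp (- (t ^ 2 * (1 + s ^ 2)) / 2) / (1 + s ^ 2).
Definition kernel_dt (t s : R) : R := - t * exp (- (t ^ 2 * (1 + s ^ 2)) / 2).
Definition kernel_int (t : R) : R := RInt (kernel t) 0 1.

Lemma kernel_derive t s : is_derive (fun u => kernel u s) t (kernel_dt t s).
Proof. unfold kernel, kernel_dt. auto_derive. nra. simpl; unfold Rdiv; field. nra. Qed.

Lemma kernel_continuous t s : continuous (kernel t) s.
Proof.
  apply (ex_derive_continuous (V := R_NormedModule)). unfold kernel. auto_derive. nra.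
Qed.

(* Joint continuity of the partial derivative, required to differentiate under the integral. *)
Lemma kernel_dt_continuous_2d t s : continuity_2d_pt kernel_dt t s.
Proof.
  apply continuity_2d_pt_mult.
  - apply continuity_2d_pt_opp, continuity_2d_pt_id1.
  - apply continuity_1d_2d_pt_comp. { apply derivable_continuous_pt, derivable_pt_exp. }
    apply (continuity_2d_pt_ext (fun u v => - (u * u * (1 + v * v)) * / 2)).
    { intros; simpl; unfold Rdiv; ring. }
    repeat first [ apply continuity_2d_pt_mult | apply continuity_2d_pt_plus
                 | apply continuity_2d_pt_opp | apply continuity_2d_pt_id1
                 | apply continuity_2d_pt_id2 | apply continuity_2d_pt_const ].
Qed.

(* \int_0^1 kernel_dt t s ds = - bell t * bell_int t, by the substitution u = t s. *)
Lemma kernel_dt_integral t : is_RInt (kernel_dt t) 0 1 (- bell t * bell_int t).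
Proof.
  replace (- bell t * bell_int t)
    with (minus (- bell t * bell_int (t * 1)) (- bell t * bell_int (t * 0))).
  2: { rewrite Rmult_1_r, Rmult_0_r, bell_int_0. unfold minus, plus, opp; simpl; ring. }
  apply (is_RInt_derive (V := R_CompleteNormedModule) (fun s => - bell t * bell_int (t * s))).
  - intros s _. auto_derive. { eexists; apply bell_int_derive. }
    rewrite (is_derive_unique _ _ _ (bell_int_derive _)). unfold kernel_dt, bell.
    replace (- (t ^ 2 * (1 + s ^ 2)) / 2) with (- t ^ 2 / 2 + - (t * s) ^ 2 / 2) by field.
    rewrite exp_plus. ring.
  - intros s _. apply (ex_derive_continuous (V := R_NormedModule)).
    unfold kernel_dt. auto_derive. auto.
Qed.

Lemma kernel_int_derive t : is_derive kernel_int t (- bell t * bell_int t).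
Proof.
  assert (Dk : forall u v, Derive (fun z => kernel z v) u = kernel_dt u v)
    by (intros; apply is_derive_unique, kernel_derive).
  assert (Hparam : is_derive kernel_int t (RInt (fun s => Derive (fun u => kernel u s) t) 0 1)).
  { apply (is_derive_RInt_param kernel 0 1 t).
    - apply filter_forall. intros u s _. eexists; apply kernel_derive.
    - intros s _. apply (continuity_2d_pt_ext kernel_dt); [intros; symmetry; apply Dk|].
      apply kernel_dt_continuous_2d.
    - apply filter_forall. intro u. apply (ex_RInt_continuous (V := R_CompleteNormedModule)).
      intros; apply kernel_continuous. }
  rewrite (RInt_ext _ (kernel_dt t)) in Hparam by (intros; apply Dk).
  rewrite (is_RInt_unique _ _ _ _ (kernel_dt_integral t)) in Hparam. exact Hparam.
Qed.

Lemma kernel_int_0 : kernel_int 0 = PI / 4.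
Proof.
  assert (Hk : forall s, kernel 0 s = / (1 + s ^ 2)).
  { intro s. unfold kernel. replace (- (0 ^ 2 * (1 + s ^ 2)) / 2) with 0 by (simpl; field).
    rewrite exp_0. unfold Rdiv. ring. }
  unfold kernel_int. replace (PI / 4) with (atan 1 - atan 0) by (rewrite atan_1, atan_0; ring).
  apply is_RInt_unique, (is_RInt_derive (V := R_CompleteNormedModule) atan).
  - intros s _. rewrite Hk. apply is_derive_Reals, derivable_pt_lim_atan.
  - intros s _. apply kernel_continuous.
Qed.

(* The identity behind \int_R bell = sqrt(2 PI): the derivative of the left side vanishes. *)
Lemma gaussian_identity t : bell_int t ^ 2 + 2 * kernel_int t = PI / 2.
Proof.
  assert (Hd : forall x, is_derive (fun u => bell_int u ^ 2 + 2 * kernel_int u) x 0).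
  { intro x.
    replace 0 with (INR 2 * bell x * bell_int x ^ pred 2 + 2 * (- bell x * bell_int x))
      by (simpl; ring).
    apply (is_derive_plus (fun u => bell_int u ^ 2)).
    - apply (is_derive_pow bell_int 2), bell_int_derive.
    - apply is_derive_scal, kernel_int_derive. }
  rewrite (constant_of_derive_zero _ Hd t 0), bell_int_0, kernel_int_0. simpl; field.
Qed.

(* Since 1/2 <= 1/(1+s^2) <= 1 and the exponent is at most - t^2 / 2 on [0,1]. *)
Lemma kernel_int_bounds t : 0 < kernel_int t <= bell t.
Proof.
  assert (Hex : ex_RInt (kernel t) 0 1).
  { apply (ex_RInt_continuous (V := R_CompleteNormedModule)). intros; apply kernel_continuous. }
  split.
  - apply RInt_gt_0; [lra | | intros; apply kernel_continuous]. intros s _. unfold kernel.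
    apply Rdiv_lt_0_compat; [apply exp_pos | nra].
  - replace (bell t) with (RInt (fun _ => bell t) 0 1)
      by (rewrite RInt_const; unfold scal; simpl; unfold mult; simpl; ring).
    apply RInt_le; [lra | auto | apply ex_RInt_const |].
    intros s Hs. unfold kernel, bell.
    apply Rle_trans with (exp (- (t ^ 2 * (1 + s ^ 2)) / 2)).
    + unfold Rdiv at 1. rewrite <- (Rmult_1_r (exp _)) at 2.
      apply Rmult_le_compat_l; [left; apply exp_pos|].
      rewrite <- Rinv_1. apply Rinv_le_contravar; nra.
    + apply exp_le_compat. nra.
Qed.

Definition sqrt2pi : R := sqrt (2 * PI).

Lemma sqrt2pi_pos : 0 < sqrt2pi.
Proof. apply sqrt_lt_R0. generalize PI_RGT_0; lra. Qed.

Lemma sqrt2pi_sq : sqrt2pi ^ 2 = 2 * PI.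
Proof. unfold sqrt2pi. simpl. rewrite Rmult_1_r. apply sqrt_sqrt. generalize PI_RGT_0; lra. Qed.

Lemma gauss_bell x : gauss x = bell x / sqrt2pi.
Proof. unfold gauss, bell, sqrt2pi, Rdiv at 2. apply Rmult_comm. Qed.

Lemma gauss_pos x : 0 < gauss x.
Proof. rewrite gauss_bell. apply Rdiv_lt_0_compat; [apply bell_pos | apply sqrt2pi_pos]. Qed.

Lemma gauss_derive x : is_derive gauss x (- x * gauss x).
Proof.
  unfold gauss. auto_derive; auto. simpl; unfold Rdiv; field.
  generalize sqrt2pi_pos; unfold sqrt2pi; lra.
Qed.

Lemma gauss_continuous x : continuous gauss x.
Proof. apply (ex_derive_continuous (V := R_NormedModule)). eexists. apply gauss_derive. Qed.

Lemma gauss_normalization x : gauss x * sqrt2pi * exp (x ^ 2 / 2) = 1.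
Proof.
  rewrite gauss_bell. unfold bell. assert (HS := sqrt2pi_pos).
  replace (exp (- x ^ 2 / 2) / sqrt2pi * sqrt2pi * exp (x ^ 2 / 2))
    with (exp (- x ^ 2 / 2 + x ^ 2 / 2)) by (rewrite exp_plus; field; lra).
  replace (- x ^ 2 / 2 + x ^ 2 / 2) with 0 by field. apply exp_0.
Qed.

Lemma gauss_scale_pos x : 0 < sqrt2pi * exp (x ^ 2 / 2).
Proof. apply Rmult_lt_0_compat; [apply sqrt2pi_pos | apply exp_pos]. Qed.

Definition cdf (x : R) : R := 1 / 2 + bell_int x / sqrt2pi.
Definition tail (x : R) : R := 1 / 2 - bell_int x / sqrt2pi.

Lemma cdf_tail x : cdf x = 1 - tail x.
Proof. unfold cdf, tail. lra. Qed.

Lemma tail_0 : tail 0 = 1 / 2.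
Proof. unfold tail. rewrite bell_int_0. unfold Rdiv. ring. Qed.

Lemma cdf_derive x : is_derive cdf x (gauss x).
Proof.
  rewrite gauss_bell. unfold cdf. auto_derive. { eexists; apply bell_int_derive. }
  replace (Derive _ x) with (bell x) by (symmetry; apply is_derive_unique, bell_int_derive).
  field. generalize sqrt2pi_pos; lra.
Qed.

Lemma cdf_increasing x y : x < y -> cdf x < cdf y.
Proof. apply (increasing_of_derive_pos cdf gauss cdf_derive gauss_pos). Qed.

Lemma tail_decreasing x y : x < y -> tail y < tail x.
Proof. intro Hxy. generalize (cdf_increasing x y Hxy). rewrite !cdf_tail. lra. Qed.

(* The Gaussian identity, rewritten for the two complementary probabilities. *)
Lemma tail_cdf_product x : tail x * cdf x = kernel_int x / PI.
Proof.
  assert (HPI := PI_RGT_0). assert (HS := sqrt2pi_pos).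
  assert (HE : bell_int x ^ 2 = PI / 2 - 2 * kernel_int x)
    by (generalize (gaussian_identity x); lra).
  unfold tail, cdf.
  replace ((1 / 2 - bell_int x / sqrt2pi) * (1 / 2 + bell_int x / sqrt2pi))
    with (1 / 4 - bell_int x ^ 2 / sqrt2pi ^ 2) by (field; lra).
  rewrite HE, sqrt2pi_sq. field. lra.
Qed.

Lemma tail_range x : 0 < tail x < 1.
Proof.
  assert (Hp : 0 < tail x * cdf x).
  { rewrite tail_cdf_product. apply Rdiv_lt_0_compat; [apply kernel_int_bounds | apply PI_RGT_0]. }
  rewrite cdf_tail in Hp. nra.
Qed.

Lemma cdf_pos x : 0 < cdf x.
Proof. rewrite cdf_tail. generalize (tail_range x); lra. Qed.

Lemma tail_cdf_product_bound x : tail x * cdf x <= bell x / PI.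
Proof.
  rewrite tail_cdf_product. unfold Rdiv. apply Rmult_le_compat_r.
  - left; apply Rinv_0_lt_compat, PI_RGT_0.
  - apply kernel_int_bounds.
Qed.

Lemma small_factor_bound x a : 0 <= a <= 1 / 2 -> a * (1 - a) <= bell x / PI ->
  x ^ 2 * a < 4 / PI.
Proof.
  intros Ha Hprod. assert (HPI := PI_RGT_0).
  assert (Hx2 : 0 <= x ^ 2) by apply pow2_ge_0.
  assert (Hdecay := bell_decay x).
  assert (Hle : a <= 2 * bell x / PI) by (unfold Rdiv in *; nra).
  apply Rle_lt_trans with (x ^ 2 * (2 * bell x / PI)).
  - apply Rmult_le_compat_l; auto.
  - replace (x ^ 2 * (2 * bell x / PI)) with (2 * (x ^ 2 * bell x) / PI) by (field; lra).
    unfold Rdiv. apply Rmult_lt_compat_r; [apply Rinv_0_lt_compat|]; lra.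
Qed.

Lemma tail_bound x : 0 <= x -> x ^ 2 * tail x < 4 / PI.
Proof.
  intro Hx. apply small_factor_bound.
  - assert (Ht : tail x <= 1 / 2).
    { rewrite <- tail_0. destruct Hx as [Hx | <-]; [left; apply tail_decreasing | right]; auto. }
    split; [left; apply tail_range | exact Ht].
  - rewrite <- cdf_tail. apply tail_cdf_product_bound.
Qed.

Lemma cdf_bound x : x <= 0 -> x ^ 2 * cdf x < 4 / PI.
Proof.
  intro Hx. apply small_factor_bound.
  - assert (Ht : 1 / 2 <= tail x).
    { rewrite <- tail_0. destruct Hx as [Hx | ->]; [left; apply tail_decreasing | right]; auto. }
    split; [left; apply cdf_pos | rewrite cdf_tail; lra].
  - replace (1 - cdf x) with (tail x) by (rewrite cdf_tail; ring). rewrite Rmult_comm.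
    apply tail_cdf_product_bound.
Qed.

Lemma tails_vanish eps : 0 < eps ->
  exists T, 1 <= T /\ forall x, T <= x -> x * tail x < eps /\ x * cdf (- x) < eps.
Proof.
  intro Heps. assert (HPI := PI_RGT_0).
  assert (HT : 0 < 4 / (PI * eps)) by (apply Rdiv_lt_0_compat; nra).
  exists (1 + 4 / (PI * eps)). split; [lra|]. intros x Hx.
  assert (Hkey : 4 / PI <= x * eps).
  { replace (4 / PI) with (4 / (PI * eps) * eps) by (field; lra).
    apply Rmult_le_compat_r; lra. }
  split; apply (Rmult_lt_reg_l x); try lra.
  - assert (H := tail_bound x ltac:(lra)). simpl in H. lra.
  - assert (H := cdf_bound (- x) ltac:(lra)). simpl in H. lra.
Qed.

(* Identification of Q and Qinv. *)

Lemma RiemannInt_gauss x b (pr : Riemann_integrable gauss x b) :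
  RiemannInt pr = tail x - tail b.
Proof.
  rewrite <- RInt_Reals. apply is_RInt_unique.
  replace (tail x - tail b) with (minus (cdf b) (cdf x))
    by (rewrite !cdf_tail; unfold minus, plus, opp; simpl; ring).
  apply (is_RInt_derive (V := R_CompleteNormedModule) cdf).
  - intros; apply cdf_derive.
  - intros; apply gauss_continuous.
Qed.

Lemma is_Q_tail x : is_Q x (tail x).
Proof.
  intros eps Heps. destruct (tails_vanish eps Heps) as [T [HT1 HT]].
  exists (Rmax x T). intros b Hb pr. rewrite RiemannInt_gauss.
  assert (HTb : T <= b) by (generalize (Rmax_r x T); lra).
  destruct (HT b HTb) as [Hb_tail _]. assert (Hpos := tail_range b).
  replace (tail x - tail b - tail x) with (- tail b) by ring.
  rewrite Rabs_Ropp, Rabs_right by lra. nra.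
Qed.

Lemma is_Q_unique x l1 l2 : is_Q x l1 -> is_Q x l2 -> l1 = l2.
Proof.
  intros H1 H2. apply Rminus_diag_uniq, Rabs_eq_0, Rle_antisym; [|apply Rabs_pos].
  apply le_epsilon. intros eps Heps.
  destruct (H1 (eps / 2)) as [M1 HM1]; [lra|]. destruct (H2 (eps / 2)) as [M2 HM2]; [lra|].
  set (b := Rmax x (Rmax M1 M2)).
  assert (Hb : M1 <= b /\ M2 <= b)
    by (unfold b; generalize (Rmax_l M1 M2) (Rmax_r M1 M2) (Rmax_r x (Rmax M1 M2)); lra).
  assert (pr : Riemann_integrable gauss x b).
  { apply ex_RInt_Reals_0, (ex_RInt_continuous (V := R_CompleteNormedModule)).
    intros; apply gauss_continuous. }
  assert (A1 := HM1 b (proj1 Hb) pr). assert (A2 := HM2 b (proj2 Hb) pr).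
  replace (l1 - l2) with (- (RiemannInt pr - l1) + (RiemannInt pr - l2)) by ring.
  eapply Rle_trans; [apply Rabs_triang|]. rewrite Rabs_Ropp. lra.
Qed.

Lemma Q_tail x : Q x = tail x.
Proof.
  apply (is_Q_unique x); [|apply is_Q_tail].
  unfold Q. apply epsilon_spec. exists (tail x). apply is_Q_tail.
Qed.

Lemma tail_injective x y : tail x = tail y -> x = y.
Proof.
  intro H. apply (injective_of_increasing cdf cdf_increasing). rewrite !cdf_tail, H. ring.
Qed.

Lemma tail_surjective e : 0 < e < 1 -> exists x, tail x = e.
Proof.
  intro He. destruct (tails_vanish (Rmin e (1 - e))) as [T [HT1 HT]].
  { apply Rmin_glb_lt; lra. }
  destruct (HT T (Rle_refl T)) as [Hright Hleft].
  assert (Hm1 := Rmin_l e (1 - e)). assert (Hm2 := Rmin_r e (1 - e)).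
  assert (Hpos_r := tail_range T). assert (Hpos_l := cdf_pos (- T)).
  assert (Hhi : 1 - e < cdf T) by (rewrite cdf_tail; nra).
  assert (Hlo : cdf (- T) < 1 - e) by nra.
  destruct (intermediate_value cdf gauss (- T) T (1 - e) cdf_derive) as [z Hz]; try lra.
  exists z. rewrite cdf_tail in Hz. lra.
Qed.

Lemma tail_Qinv e : 0 < e < 1 -> tail (Qinv e) = e.
Proof.
  intro He. rewrite <- Q_tail. unfold Qinv. apply epsilon_spec.
  destruct (tail_surjective e He) as [x Hx]. exists x. rewrite Q_tail; auto.
Qed.

Lemma Qinv_tail x : Qinv (tail x) = x.
Proof. apply tail_injective, tail_Qinv, tail_range. Qed.

(* cdf_primitive x = \int_{-oo}^x cdf; it is positive since it increases and vanishes at -oo. *)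
Definition cdf_primitive (x : R) : R := gauss x + x * cdf x.

Lemma cdf_primitive_derive x : is_derive cdf_primitive x (cdf x).
Proof.
  unfold cdf_primitive. replace (cdf x) with (- x * gauss x + (1 * cdf x + x * gauss x)) by ring.
  apply (is_derive_plus gauss (fun y => y * cdf y)); [apply gauss_derive|].
  apply (is_derive_mult (fun y => y) cdf);
    [apply (is_derive_id (K := R_AbsRing)) | apply cdf_derive | intros; apply Rmult_comm].
Qed.

Lemma cdf_primitive_pos x : 0 < cdf_primitive x.
Proof.
  assert (Hincr := increasing_of_derive_pos _ _ cdf_primitive_derive cdf_pos).
  destruct (Rlt_or_le 0 (cdf_primitive x)) as [Hpos | Hnonpos]; auto. exfalso.
  assert (H1 : cdf_primitive (x - 1) < cdf_primitive x) by (apply Hincr; lra).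
  destruct (tails_vanish (- cdf_primitive (x - 1))) as [T [_ HT]]; [lra|].
  set (u := Rmax T (1 - x) + 1).
  assert (Hu : T <= u /\ - u < x - 1)
    by (unfold u; generalize (Rmax_l T (1 - x)) (Rmax_r T (1 - x)); lra).
  destruct (HT u (proj1 Hu)) as [_ Hcdf].
  assert (Hy : cdf_primitive (- u) < cdf_primitive (x - 1)) by (apply Hincr; lra).
  assert (Hg := gauss_pos (- u)). unfold cdf_primitive at 1 in Hy. lra.
Qed.

(* psi (Qinv e) = Qinv e + (1 - e) sqrt(2 PI) e^{Qinv e ^ 2 / 2} is the denominator
   of the fixed-point equation. *)
Definition psi (x : R) : R := x + cdf x * sqrt2pi * exp (x ^ 2 / 2).

Lemma cdf_primitive_scaled x :
  sqrt2pi * exp (x ^ 2 / 2) * cdf_primitive x = 1 + x * cdf x * sqrt2pi * exp (x ^ 2 / 2).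
Proof. rewrite <- (gauss_normalization x). unfold cdf_primitive. ring. Qed.

Lemma psi_derive x : is_derive psi x (1 + sqrt2pi * exp (x ^ 2 / 2) * cdf_primitive x).
Proof.
  rewrite cdf_primitive_scaled, <- (gauss_normalization x) at 1. unfold psi.
  auto_derive. { eexists; apply cdf_derive. }
  replace (Derive _ x) with (gauss x) by (symmetry; apply is_derive_unique, cdf_derive).
  simpl. unfold Rdiv. field.
Qed.

Lemma psi_increasing x y : x < y -> psi x < psi y.
Proof.
  apply (increasing_of_derive_pos psi _ psi_derive). intro z.
  generalize (Rmult_lt_0_compat _ _ (gauss_scale_pos z) (cdf_primitive_pos z)). lra.
Qed.

Lemma psi_neg_1 : psi (-1) < 0.
Proof.
  generalize (Rmult_lt_0_compat _ _ (gauss_scale_pos (-1)) (cdf_primitive_pos (-1))).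
  rewrite cdf_primitive_scaled. unfold psi. lra.
Qed.

Lemma psi_gt_id x : x < psi x.
Proof.
  unfold psi. generalize (Rmult_lt_0_compat _ _ (cdf_pos x) (gauss_scale_pos x)).
  rewrite Rmult_assoc. lra.
Qed.

Lemma psi_solution kappa : 0 < kappa -> exists x, psi x = / kappa.
Proof.
  intro Hk. assert (Hik : 0 < / kappa) by (apply Rinv_0_lt_compat; auto).
  apply (intermediate_value psi _ (-1) (/ kappa) (/ kappa) psi_derive); [lra|].
  split; [generalize psi_neg_1 | apply psi_gt_id]; lra.
Qed.

(* The objective in the coordinate x = Qinv e. *)

Definition f_quantile (kappa x : R) : R := (1 - kappa * x) * cdf x.

Lemma f_as_f_quantile kappa e : 0 < e < 1 -> Defs.f kappa e = f_quantile kappa (Qinv e).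
Proof. intro He. unfold Defs.f, f_quantile. rewrite cdf_tail, tail_Qinv; auto. Qed.

Lemma f_quantile_derive kappa x : 0 < kappa ->
  is_derive (f_quantile kappa) x (kappa * gauss x * (/ kappa - psi x)).
Proof.
  intro Hk. unfold f_quantile. auto_derive. { eexists; apply cdf_derive. }
  replace (Derive _ x) with (gauss x) by (symmetry; apply is_derive_unique, cdf_derive).
  unfold psi.
  replace (kappa * gauss x * (/ kappa - (x + cdf x * sqrt2pi * exp (x ^ 2 / 2))))
    with (gauss x - kappa * x * gauss x - kappa * cdf x * (gauss x * sqrt2pi * exp (x ^ 2 / 2)))
    by (field; lra).
  rewrite gauss_normalization. ring.
Qed.

(* Since psi increases through 1/kappa at xs, f_quantile increases before xs and decreases after. *)
Lemma f_quantile_strict_max kappa xs x : 0 < kappa -> psi xs = / kappa -> x <> xs ->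
  f_quantile kappa x < f_quantile kappa xs.
Proof.
  intros Hk Hxs Hneq.
  assert (Hd : forall y, is_derive (f_quantile kappa) y (kappa * gauss y * (/ kappa - psi y)))
    by (intro; apply f_quantile_derive; auto).
  assert (Hslope : forall c, 0 < kappa * gauss c)
    by (intro; apply Rmult_lt_0_compat; auto; apply gauss_pos).
  destruct (Rtotal_order x xs) as [Hlt | [Heq | Hgt]]; [| contradiction |].
  - destruct (mean_value _ _ _ _ Hlt Hd) as [c [Hc Hmv]].
    assert (psi c < / kappa) by (rewrite <- Hxs; apply psi_increasing; lra).
    assert (0 < kappa * gauss c * (/ kappa - psi c) * (xs - x)).
    { apply Rmult_lt_0_compat; [apply Rmult_lt_0_compat; auto |]; lra. }
    lra.
  - destruct (mean_value _ _ _ _ Hgt Hd) as [c [Hc Hmv]].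
    assert (/ kappa < psi c) by (rewrite <- Hxs; apply psi_increasing; lra).
    assert (0 < kappa * gauss c * (psi c - / kappa) * (x - xs)).
    { apply Rmult_lt_0_compat; [apply Rmult_lt_0_compat; auto |]; lra. }
    lra.
Qed.

Lemma maximizer_tail kappa xs e : 0 < kappa -> psi xs = / kappa ->
  (is_maximizer kappa e <-> e = tail xs).
Proof.
  intros Hk Hxs. split.
  - intros [He Hmax]. rewrite <- (tail_Qinv e He). f_equal.
    destruct (Req_dec (Qinv e) xs) as [| Hneq]; auto. exfalso.
    assert (H := Hmax (tail xs) (tail_range xs)).
    rewrite !f_as_f_quantile, Qinv_tail in H by (auto; apply tail_range).
    generalize (f_quantile_strict_max kappa xs (Qinv e) Hk Hxs Hneq). lra.
  - intros ->. split; [apply tail_range|]. intros e' He'.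
    rewrite !f_as_f_quantile, Qinv_tail by (auto; apply tail_range).
    destruct (Req_dec (Qinv e') xs) as [-> | Hneq]; [lra|].
    left; apply f_quantile_strict_max; auto.
Qed.

Lemma fixed_point_iff kappa e : 0 < kappa -> 0 < e < 1 ->
  (fixed_point kappa e <-> psi (Qinv e) = / kappa).
Proof.
  intros Hk He. unfold fixed_point.
  replace (1 - e) with (cdf (Qinv e)) by (rewrite cdf_tail, tail_Qinv; auto).
  change (/ psi (Qinv e) = kappa <-> psi (Qinv e) = / kappa).
  split; intro H; [rewrite <- H | rewrite H]; rewrite Rinv_inv; auto.
Qed.

Lemma psi_solution_antitone k1 k2 x1 x2 : 0 < k1 -> k1 < k2 ->
  psi x1 = / k1 -> psi x2 = / k2 -> x2 < x1.
Proof.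
  intros Hk1 Hk12 Hx1 Hx2.
  assert (Hinv : / k2 < / k1) by (apply Rinv_lt_contravar; nra).
  destruct (Rtotal_order x2 x1) as [Hlt | [-> | Hgt]]; auto.
  - lra.
  - apply psi_increasing in Hgt. lra.
Qed.

Theorem proposition1 :
  (forall kappa, 0 < kappa < 1 -> exists! e, is_maximizer kappa e) /\
  (forall kappa e, 0 < kappa < 1 -> 0 < e < 1 ->
     (is_maximizer kappa e <-> fixed_point kappa e)) /\
  (forall k1 k2 e1 e2, 0 < k1 -> k1 < k2 -> k2 < 1 ->
     is_maximizer k1 e1 -> is_maximizer k2 e2 -> e1 < e2).
Proof.
  split; [|split].
  - intros kappa Hk. destruct (psi_solution kappa ltac:(lra)) as [xs Hxs].
    exists (tail xs). split; [|intro e]; rewrite (maximizer_tail kappa xs) by (auto; lra); auto.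
  - intros kappa e Hk He. destruct (psi_solution kappa ltac:(lra)) as [xs Hxs].
    rewrite (maximizer_tail kappa xs e), fixed_point_iff by (auto; lra). split.
    + intros ->. rewrite Qinv_tail. exact Hxs.
    + intro H. rewrite <- (tail_Qinv e He). f_equal.
      apply (injective_of_increasing psi psi_increasing). congruence.
  - intros k1 k2 e1 e2 Hk1 Hk12 Hk2 M1 M2.
    destruct (psi_solution k1 Hk1) as [x1 Hx1]. destruct (psi_solution k2 ltac:(lra)) as [x2 Hx2].
    rewrite (maximizer_tail k1 x1) in M1 by auto. rewrite (maximizer_tail k2 x2) in M2 by lra.
    subst. apply tail_decreasing, (psi_solution_antitone k1 k2); auto.
Qed.
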